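(* Assume superclub holds. Then for every collection $\{C_\alpha:\alpha<\omega_2\}$ of club subsets of $\omega_1$ there are pairwise distinct ordinals $\beta_\xi<\omega_2$ ($\xi<\omega_1$) such that $\bigcap_{\xi<\omega_1}C_{\beta_\xi}$ is a club subset of $\omega_1$.
   Context: A superclub sequence is a sequence $\langle A_\delta:\delta\in\lim(\omega_1)\rangle$ such that each $A_\delta$ is a cofinal subset of $\delta$ and for every unbounded $x\subseteq\omega_1$ there is an unbounded $y\subseteq x$ such that $\{\delta<\omega_1: y\cap\delta=A_\delta\}$ is stationary in $\omega_1$. Superclub (at $\aleph_1$) means a superclub sequence exists. *)

(* omega_1 and omega_2 are represented by arbitrary types carrying
   a well-order characterising them up to isomorphism. *)
From Stdlib Require Import Wellfounded.

Definition strict_wellorder {T : Type} (lt : T -> T -> Prop) : Prop :=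
  well_founded lt /\
  (forall x y z, lt x y -> lt y z -> lt x z) /\
  (forall x y, lt x y \/ x = y \/ lt y x).

Definition countable_sub {T : Type} (P : T -> Prop) : Prop :=
  exists f : T -> nat, forall x y, P x -> P y -> f x = f y -> x = y.

Definition is_omega1 (T : Type) (lt : T -> T -> Prop) : Prop :=
  strict_wellorder lt /\
  (forall x, countable_sub (fun y => lt y x)) /\
  ~ countable_sub (fun _ : T => True).

(* (U, ltU) is (isomorphic to) omega_2, given omega_1 = T: a well-order of
   cardinality > aleph_1 all of whose proper initial segments have size <= aleph_1. *)
Definition is_omega2 (T : Type) (U : Type) (ltU : U -> U -> Prop) : Prop :=
  strict_wellorder ltU /\
  (forall a, exists f : U -> T, forall x y, ltU x a -> ltU y a -> f x = f y -> x = y) /\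
  ~ (exists f : U -> T, forall x y, f x = f y -> x = y).

Section Omega1Notions.
Context {T : Type} (lt : T -> T -> Prop).

Definition le (x y : T) : Prop := lt x y \/ x = y.

Definition is_limit (d : T) : Prop :=
  (exists y, lt y d) /\ (forall y, lt y d -> exists z, lt y z /\ lt z d).

Definition cofinal_in (A : T -> Prop) (d : T) : Prop :=
  (forall a, A a -> lt a d) /\ (forall y, lt y d -> exists a, A a /\ le y a).

Definition unbounded (X : T -> Prop) : Prop :=
  forall a, exists b, X b /\ le a b.

Definition closed (X : T -> Prop) : Prop :=
  forall d, is_limit d ->
    (forall y, lt y d -> exists b, X b /\ le y b /\ lt b d) -> X d.

Definition club (X : T -> Prop) : Prop := closed X /\ unbounded X.

Definition stationary (S : T -> Prop) : Prop :=
  forall C, club C -> exists d, C d /\ S d.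

(* A superclub sequence <A_d : d in lim(omega_1)>; values at non-limits are ignored. *)
Definition superclub_seq (A : T -> T -> Prop) : Prop :=
  (forall d, is_limit d -> cofinal_in (A d) d) /\
  (forall X, unbounded X ->
     exists Y, (forall z, Y z -> X z) /\ unbounded Y /\
       stationary (fun d => is_limit d /\ forall z, (Y z /\ lt z d) <-> A d z)).

Definition superclub : Prop := exists A, superclub_seq A.

End Omega1Notions.

From Stdlib Require Import Classical ClassicalEpsilon FunctionalExtensionality Arith Lia Cantor.

(* Since there are aleph_2 clubs [C a] but only aleph_1 guesses [A d], some
   index [a0] is such that whenever [A d ⊆ C a0], uncountably many [C a]
   contain [A d].  Superclub applied to [C a0] gives [Y ⊆ C a0] whose set [S]
   of guessing points [d] (with [A d = Y ∩ d]) is stationary.  Recursively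
   along omega_1 choose [gam v ∈ S] above [v] and in every earlier
   [C (beta xi)], then [del v ∈ S] above all [gam xi] with [xi <= v], and a
   new [beta v] with [A (del v) ⊆ C (beta v)].  For [xi >= v], the set
   [Y ∩ gam v] is cofinal in [gam v] and contained in
   [A (del xi) ⊆ C (beta xi)], so [gam v ∈ C (beta xi)] by closure: every
   [gam v] lies in the intersection, which is therefore unbounded. *)

Lemma Cantor_to_nat_inj p q : Cantor.to_nat p = Cantor.to_nat q -> p = q.
Proof.
  intros E. rewrite <- (cancel_of_to p), <- (cancel_of_to q), E. reflexivity.
Qed.

Lemma countable_sub_incl {A : Type} (P Q : A -> Prop) :
  (forall x, P x -> Q x) -> countable_sub Q -> countable_sub P.
Proof. intros HPQ [f Hf]. exists f. auto. Qed.

Lemma countable_sub_image {A B : Type} (P : A -> Prop) (f : A -> B) :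
  countable_sub P -> countable_sub (fun y => exists x, P x /\ y = f x).
Proof.
  intros [c Hc].
  destruct (choice (fun y n => (exists x, P x /\ y = f x) ->
                               exists x, P x /\ y = f x /\ c x = n)) as [code Hcode].
  { intros y. destruct (classic (exists x, P x /\ y = f x)) as [[x [Px Ey]]|Hn].
    - exists (c x). eauto.
    - exists 0. tauto. }
  exists code. intros y1 y2 Hy1 Hy2 E.
  destruct (Hcode y1 Hy1) as [x1 [Px1 [E1 C1]]].
  destruct (Hcode y2 Hy2) as [x2 [Px2 [E2 C2]]].
  rewrite E1, E2, (Hc x1 x2); congruence.
Qed.

Lemma countable_sub_prod_nat {A : Type} (P : A -> Prop) :
  countable_sub P -> countable_sub (fun p : A * nat => P (fst p)).
Proof.
  intros [c Hc]. exists (fun p => Cantor.to_nat (c (fst p), snd p)).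
  intros [x n] [y m] Px Py E. apply Cantor_to_nat_inj in E. simpl in *.
  injection E as E1 E2. rewrite (Hc x y); auto.
Qed.

Lemma inj_of_countable_cover {I A : Type} (N : I -> A -> Prop) :
  (forall a, exists i, N i a /\ countable_sub (N i)) ->
  exists f : A -> I * nat, forall x y, f x = f y -> x = y.
Proof.
  intros Hcover. destruct (choice _ Hcover) as [F HF].
  destruct (choice (fun i (c : A -> nat) => countable_sub (N i) ->
                      forall x y, N i x -> N i y -> c x = c y -> x = y)) as [code Hcode].
  { intros i. destruct (classic (countable_sub (N i))) as [[c Hc]|Hn].
    - exists c. auto.
    - exists (fun _ => 0). tauto. }
  exists (fun a => (F a, code (F a) a)). intros x y E. injection E as E1 E2.
  destruct (HF x) as [Nx Cx]. destruct (HF y) as [Ny _].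
  rewrite <- E1 in E2, Ny. exact (Hcode (F x) Cx x y Nx Ny E2).
Qed.

Lemma closed_inter {T I : Type} (lt : T -> T -> Prop) (C : I -> T -> Prop) :
  (forall i, closed lt (C i)) -> closed lt (fun z => forall i, C i z).
Proof.
  intros HC d Hd Hcof i. apply HC; auto.
  intros y Hy. destruct (Hcof y Hy) as [b [Cb Hb]]. eauto.
Qed.

Section Omega1.
Context {T : Type} (lt : T -> T -> Prop).
Hypothesis lt_wf : well_founded lt.
Hypothesis lt_trans : forall x y z, lt x y -> lt y z -> lt x z.
Hypothesis lt_trichotomy : forall x y, lt x y \/ x = y \/ lt y x.
Hypothesis segment_countable : forall x, countable_sub (fun y => lt y x).
Hypothesis T_uncountable : ~ countable_sub (fun _ : T => True).

Lemma lt_irrefl x : ~ lt x x.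
Proof. induction (lt_wf x) as [x _ IH]. intros H. exact (IH x H H). Qed.

Lemma le_lt_trans x y z : le lt x y -> lt y z -> lt x z.
Proof. intros [H|<-] H'; eauto. Qed.

Lemma lt_le_trans x y z : lt x y -> le lt y z -> lt x z.
Proof. intros H [H'|<-]; eauto. Qed.

Lemma le_trans x y z : le lt x y -> le lt y z -> le lt x z.
Proof. intros [H|<-] [H'|<-]; unfold le; eauto. Qed.

Lemma le_of_not_lt x y : ~ lt x y -> le lt y x.
Proof. intros H. destruct (lt_trichotomy x y) as [?|[<-|?]]; unfold le; tauto. Qed.

Lemma T_inhabited : inhabited T.
Proof.
  apply NNPP. intros H. apply T_uncountable. exists (fun _ => 0).
  intros x. exfalso. exact (H (inhabits x)).
Qed.

(* If P were cofinal, [b |-> (code of a point of P above b, rank of b below it)]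
   would inject T into nat. *)
Lemma countable_bounded (P : T -> Prop) :
  countable_sub P -> exists b, forall x, P x -> lt x b.
Proof.
  intros [f Hf]. apply NNPP. intros Hn.
  assert (Hcof : forall b, exists x, P x /\ le lt b x).
  { intros b. apply NNPP. intros H. apply Hn. exists b. intros x Px.
    apply NNPP. intros Hx. apply H. exists x. split; auto. apply le_of_not_lt; auto. }
  destruct (choice _ Hcof) as [above Habove].
  destruct (choice _ segment_countable) as [rank Hrank].
  apply T_uncountable.
  exists (fun b => Cantor.to_nat (f (above b),
     if excluded_middle_informative (b = above b) then 0 else S (rank (above b) b))).
  intros a b _ _ E. apply Cantor_to_nat_inj in E. injection E as E1 E2.
  destruct (Habove a) as [Pa Ha]. destruct (Habove b) as [Pb Hb].
  assert (Eab : above a = above b) by (apply Hf; auto).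
  destruct (excluded_middle_informative (a = above a)) as [e1|e1];
  destruct (excluded_middle_informative (b = above b)) as [e2|e2]; try discriminate.
  - congruence.
  - injection E2 as E2. rewrite Eab in E2.
    destruct Ha as [Ha|Ha]; [|congruence]. destruct Hb as [Hb|Hb]; [|congruence].
    rewrite Eab in Ha. exact (Hrank (above b) a b Ha Hb E2).
Qed.

Lemma exists_gt x : exists y, lt x y.
Proof.
  destruct (countable_bounded (fun y => y = x)) as [b Hb].
  - exists (fun _ => 0). intros; subst; auto.
  - exists b. auto.
Qed.

Lemma exists_gt2 x y : exists z, lt x z /\ lt y z.
Proof.
  destruct (lt_trichotomy x y) as [H|[<-|H]].
  - destruct (exists_gt y) as [z Hz]. eauto.
  - destruct (exists_gt x) as [z Hz]. eauto.
  - destruct (exists_gt x) as [z Hz]. eauto.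
Qed.

Lemma image_bounded (v x : T) (f : T -> T) :
  exists b, lt x b /\ forall m, lt m v -> lt (f m) b.
Proof.
  destruct (countable_bounded _ (countable_sub_image _ f (segment_countable v))) as [b1 Hb1].
  destruct (exists_gt2 x b1) as [b [Hx Hb]]. exists b. split; auto.
  intros m Hm. apply lt_trans with b1; auto. apply Hb1. eauto.
Qed.

Lemma uncountable_avoids_image {B : Type} (P : B -> Prop) (v : T) (h : T -> B) :
  ~ countable_sub P -> exists b, P b /\ forall m, lt m v -> h m <> b.
Proof.
  intros HP. apply NNPP. intros Hn. apply HP.
  eapply countable_sub_incl; [|exact (countable_sub_image _ h (segment_countable v))].
  intros b Pb. apply NNPP. intros Hb. apply Hn. exists b. split; auto.
  intros m Hm E. apply Hb. eauto.
Qed.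

Lemma exists_least (P : T -> Prop) :
  (exists x, P x) -> exists x, P x /\ forall y, P y -> ~ lt y x.
Proof.
  intros [x Px]. revert Px. induction (lt_wf x) as [x _ IH]. intros Px.
  destruct (classic (exists y, P y /\ lt y x)) as [[y [Py Hy]]|Hn].
  - exact (IH y Hy Py).
  - exists x. split; auto. intros y Py Hy. apply Hn. eauto.
Qed.

Lemma increasing_le (a : nat -> T) : (forall k, lt (a k) (a (S k))) ->
  forall k j, k <= j -> le lt (a k) (a j).
Proof.
  intros Hinc k j Hkj. induction Hkj.
  - right; reflexivity.
  - left. eapply le_lt_trans; eauto.
Qed.

Lemma increasing_sup (a : nat -> T) : (forall k, lt (a k) (a (S k))) ->
  exists g, (forall k, lt (a k) g) /\ (forall y, lt y g -> exists k, le lt y (a k)).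
Proof.
  intros Hinc.
  assert (Hrange : countable_sub (fun z => exists k, True /\ z = a k)).
  { apply countable_sub_image. exists (fun k => k). auto. }
  destruct (countable_bounded _ Hrange) as [b Hb].
  destruct (exists_least (fun g => forall k, lt (a k) g)) as [g [Hg Hleast]].
  { exists b. intros k. apply Hb. eauto. }
  exists g. split; auto. intros y Hy.
  apply NNPP. intros Hn. apply (Hleast y); auto. intros k.
  apply NNPP. intros Hk. apply Hn. exists k. apply le_of_not_lt. auto.
Qed.

(* The sup of an increasing sequence meeting each [D n] infinitely often
   (scheduled by Cantor unpairing) lies in every [D n]. *)
Lemma clubs_nat_common_above (D : nat -> T -> Prop) :
  (forall n, club lt (D n)) -> forall x0, exists g, lt x0 g /\ forall n, D n g.
Proof.
  intros HD x0.
  assert (Hnext : forall p : nat * T, exists b, lt (snd p) b /\ D (fst p) b).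
  { intros [n x]. destruct (exists_gt x) as [y Hy].
    destruct (proj2 (HD n) y) as [b [Db Hb]].
    exists b. split; auto. eapply lt_le_trans; eauto. }
  destruct (choice _ Hnext) as [next Hnext'].
  set (a := fix a k := match k with 0 => x0 | S k => next (fst (Cantor.of_nat k), a k) end).
  assert (Hinc : forall k, lt (a k) (a (S k))).
  { intros k. exact (proj1 (Hnext' (fst (Cantor.of_nat k), a k))). }
  assert (HinD : forall k, D (fst (Cantor.of_nat k)) (a (S k))).
  { intros k. exact (proj2 (Hnext' (fst (Cantor.of_nat k), a k))). }
  destruct (increasing_sup a Hinc) as [g [Hub Hlub]].
  exists g. split; [exact (Hub 0)|].
  intros n. apply (proj1 (HD n)).
  - split; [exists (a 0); auto|].
    intros y Hy. destruct (Hlub y Hy) as [k Hk]. exists (a (S k)). split; auto.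
    eapply le_lt_trans; eauto.
  - intros y Hy. destruct (Hlub y Hy) as [k Hk].
    set (j := Cantor.to_nat (n, k)).
    assert (Hj : Cantor.of_nat j = (n, k)) by apply cancel_of_to.
    assert (Hkj : k <= j) by (pose proof (to_nat_non_decreasing n k); unfold j; lia).
    exists (a (S j)). split; [|split; [left|auto]].
    + pose proof (HinD j) as H. rewrite Hj in H. exact H.
    + apply le_lt_trans with (a j); [|auto].
      eapply le_trans; [exact Hk|]. apply increasing_le; auto.
Qed.

Lemma club_countable_inter (I : T -> Prop) (K : T -> T -> Prop) :
  countable_sub I -> (forall m, I m -> club lt (K m)) ->
  club lt (fun z => forall m, I m -> K m z).
Proof.
  intros [c Hc] HK. split.
  - apply (closed_inter lt (fun m z => I m -> K m z)). intros m d Hd Hcof Im.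
    apply (proj1 (HK m Im)); auto.
    intros y Hy. destruct (Hcof y Hy) as [b [Kb Hb]]. exists b; auto.
  - intros a.
    set (D := fun n z => forall m, I m -> c m = n -> K m z).
    assert (HD : forall n, club lt (D n)).
    { intros n. split.
      - apply (closed_inter lt (fun m z => I m -> c m = n -> K m z)).
        intros m d Hd Hcof Im Em. apply (proj1 (HK m Im)); auto.
        intros y Hy. destruct (Hcof y Hy) as [b [Kb Hb]]. exists b; auto.
      - intros x. destruct (classic (exists m, I m /\ c m = n)) as [[m0 [I0 E0]]|Hn].
        + destruct (proj2 (HK m0 I0) x) as [b [Kb Hb]].
          exists b. split; auto. intros m Im Em.
          rewrite (Hc m m0); congruence.
        + exists x. split; [|right; reflexivity]. intros m Im Em. exfalso; eauto. }
    destruct (clubs_nat_common_above D HD a) as [g [Hg HgD]].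
    exists g. split; [|left; auto]. intros m Im. exact (HgD (c m) m Im eq_refl).
Qed.

Lemma stationary_club_above (S X : T -> Prop) : stationary lt S -> club lt X ->
  forall a, exists d, S d /\ X d /\ lt a d.
Proof.
  intros HS [Xcl Xunb] a.
  destruct (HS (fun z => lt a z /\ X z)) as [d [[Had Xd] Sd]]; [|exists d; auto].
  split.
  - intros d Hd Hcof. split.
    + destruct Hd as [[y0 Hy0] _]. destruct (Hcof y0 Hy0) as [b [[Hab _] [_ Hbd]]]. eauto.
    + apply Xcl; auto. intros y Hy. destruct (Hcof y Hy) as [b [[_ Xb] Hb]]. eauto.
  - intros b. destruct (exists_gt2 a b) as [s [Has Hbs]].
    destruct (Xunb s) as [x [Xx Hsx]]. exists x. split; [split|]; auto.
    + eapply lt_le_trans; eauto.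
    + left. eapply lt_le_trans; eauto.
Qed.

Lemma wf_recursion {X : Type} (x0 : X) (P : T -> (T -> X) -> X -> Prop) :
  (forall v h h' x, (forall m, lt m v -> h m = h' m) -> P v h x -> P v h' x) ->
  (forall v h, exists x, P v h x) -> exists g : T -> X, forall v, P v g (g v).
Proof.
  intros Hlocal Hex.
  destruct (choice (fun (p : T * (T -> X)) x => P (fst p) (snd p) x)) as [sel Hsel].
  { intros [v h]. apply Hex. }
  set (extend := fun v (rec : forall m, lt m v -> X) (m : T) =>
     match excluded_middle_informative (lt m v) with left p => rec m p | right _ => x0 end).
  set (F := fun v (rec : forall m, lt m v -> X) => sel (v, extend v rec)).
  set (g := Fix lt_wf (fun _ => X) F).
  assert (Hg : forall v, g v = F v (fun m _ => g m)).
  { intros v. unfold g. rewrite (Fix_eq lt_wf (fun _ => X) F); [reflexivity|].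
    intros x f1 f2 E. unfold F. do 2 f_equal.
    unfold extend. apply functional_extensionality. intros m.
    destruct (excluded_middle_informative (lt m x)); auto. }
  exists g. intros v. rewrite Hg. unfold F.
  apply (Hlocal v (extend v (fun m _ => g m))).
  - intros m Hm. unfold extend. destruct (excluded_middle_informative (lt m v)); tauto.
  - exact (Hsel (v, extend v (fun m _ => g m))).
Qed.

Lemma iter_increasing (s : T -> T) : (forall x, lt x (s x)) ->
  forall n m x, n < m -> lt (Nat.iter n s x) (Nat.iter m s x).
Proof.
  intros Hs n m x Hnm. induction Hnm; simpl; eauto.
Qed.

Lemma iter_ge (s : T -> T) : (forall x, lt x (s x)) ->
  forall n x, le lt x (Nat.iter n s x).
Proof.
  intros Hs n x. destruct n as [|n]; [right; reflexivity|].
  left. apply (iter_increasing s Hs 0). lia.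
Qed.

(* [(d, n) |-> s^n (f d)], where [f d] is chosen above all the iterates
   [s^n (f m)] with [m < d]. *)
Lemma prod_nat_inj : exists e : T * nat -> T, forall p q, e p = e q -> p = q.
Proof.
  destruct T_inhabited as [t0].
  destruct (choice _ exists_gt) as [s Hs].
  destruct (wf_recursion t0 (fun v h x => forall m, lt m v -> forall n, lt (Nat.iter n s (h m)) x))
    as [f Hf].
  - intros v h h' x E H m Hm n. rewrite <- E; auto.
  - intros v h.
    destruct (countable_bounded _ (countable_sub_image _ (fun p => Nat.iter (snd p) s (h (fst p)))
                (countable_sub_prod_nat _ (segment_countable v)))) as [b Hb].
    exists b. intros m Hm n. apply Hb. exists (m, n). auto.
  - exists (fun p => Nat.iter (snd p) s (f (fst p))).
    assert (Hbelow : forall d d' n n', lt d d' -> Nat.iter n s (f d) <> Nat.iter n' s (f d')).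
    { intros d d' n n' Hdd' E. apply (lt_irrefl (Nat.iter n s (f d))).
      eapply lt_le_trans; [exact (Hf d' d Hdd' n)|]. rewrite E. apply iter_ge; auto. }
    assert (Hsame : forall d n n', n < n' -> Nat.iter n s (f d) <> Nat.iter n' s (f d)).
    { intros d n n' Hnn' E. apply (lt_irrefl (Nat.iter n s (f d))).
      rewrite E at 2. apply iter_increasing; auto. }
    intros [d n] [d' n'] E. simpl in E.
    destruct (lt_trichotomy d d') as [H|[<-|H]].
    + exfalso. exact (Hbelow _ _ _ _ H E).
    + destruct (Nat.lt_trichotomy n n') as [H|[<-|H]]; [|reflexivity|];
        exfalso; [exact (Hsame _ _ _ H E) | exact (Hsame _ _ _ H (eq_sym E))].
    + exfalso. exact (Hbelow _ _ _ _ H (eq_sym E)).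
Qed.

(* If no such [a] existed, [U] would be covered by [aleph_1] countable sets. *)
Lemma exists_uncountable_fibres {U : Type} (N : T -> U -> Prop) :
  ~ (exists f : U -> T, forall x y, f x = f y -> x = y) ->
  exists a, forall d, N d a -> ~ countable_sub (N d).
Proof.
  intros U_big. apply NNPP. intros Hn.
  destruct (inj_of_countable_cover N) as [f Hf].
  { intros a. apply NNPP. intros Ha. apply Hn. exists a. intros d Nd Hd. apply Ha. eauto. }
  destruct prod_nat_inj as [e He].
  apply U_big. exists (fun a => e (f a)). auto.
Qed.

Section Construction.
Context {U : Type} (A : T -> T -> Prop) (C : U -> T -> Prop).
Hypothesis A_cofinal : forall d, is_limit lt d -> cofinal_in lt (A d) d.
Hypothesis C_club : forall a, club lt (C a).

Definition inside (d : T) (a : U) : Prop := forall z, A d z -> C a z.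

Variables (a0 : U) (Y : T -> Prop).
Hypothesis Y_sub : forall z, Y z -> C a0 z.
Hypothesis a0_fibres : forall d, inside d a0 -> ~ countable_sub (inside d).

Definition guesses (d : T) : Prop := is_limit lt d /\ forall z, (Y z /\ lt z d) <-> A d z.

Hypothesis guesses_stationary : stationary lt guesses.

Lemma guesses_uncountable d : guesses d -> ~ countable_sub (inside d).
Proof. intros [_ Hd]. apply a0_fibres. intros z Az. apply Y_sub, Hd, Az. Qed.

(* [A d = Y ∩ d] is cofinal in [d] and contained in [A e = Y ∩ e ⊆ C a]. *)
Lemma closed_at_guess d e a : guesses d -> guesses e -> lt d e -> inside e a -> C a d.
Proof.
  intros [Hlim Hd] [_ He] Hde Hin. apply (proj1 (C_club a)); auto.
  intros y Hy. destruct (proj2 (A_cofinal d Hlim) y Hy) as [z [Az Hyz]].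
  destruct (proj2 (Hd z) Az) as [Yz Hzd].
  exists z. split; auto. apply Hin, He. split; eauto.
Qed.

Record stage : Type := Stage { idx : U; gam : T; del : T }.

Record good_stage (v : T) (h : T -> stage) (x : stage) : Prop := {
  gam_guesses : guesses (gam x);
  gam_above : lt v (gam x);
  gam_in_earlier : forall m, lt m v -> C (idx (h m)) (gam x);
  del_guesses : guesses (del x);
  gam_lt_del : lt (gam x) (del x);
  earlier_gam_lt_del : forall m, lt m v -> lt (gam (h m)) (del x);
  inside_del_idx : inside (del x) (idx x);
  idx_fresh : forall m, lt m v -> idx (h m) <> idx x }.

Lemma good_stage_exists v h : exists x, good_stage v h x.
Proof.
  destruct (stationary_club_above guesses (fun z => forall m, lt m v -> C (idx (h m)) z)
              guesses_stationary) with (a := v) as [g [Gg [Cg Hvg]]].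
  { apply club_countable_inter; [apply segment_countable | intros m _; apply C_club]. }
  destruct (image_bounded v g (fun m => gam (h m))) as [b [Hgb Hb]].
  destruct (stationary_club_above guesses (fun _ => True) guesses_stationary) with (a := b)
    as [e [Ge [_ Hbe]]].
  { split; [intros d _ _; exact I | intros a; exists a; split; [exact I | right; reflexivity]]. }
  destruct (uncountable_avoids_image (inside e) v (fun m => idx (h m)) (guesses_uncountable e Ge))
    as [a [Ha Hfresh]].
  exists (Stage a g e). constructor; simpl; eauto.
Qed.

Lemma good_stages_exist : exists g : T -> stage, forall v, good_stage v g (g v).
Proof.
  destruct T_inhabited as [t0].
  apply (wf_recursion (Stage a0 t0 t0)); [|exact good_stage_exists].
  intros v h h' x E [H1 H2 H3 H4 H5 H6 H7 H8].
  constructor; auto; intros m Hm; rewrite <- E; auto.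
Qed.

Lemma good_stages_gam_inter (g : T -> stage) : (forall v, good_stage v g (g v)) ->
  forall a xi, C (idx (g xi)) (gam (g a)).
Proof.
  intros Hg a xi. destruct (lt_trichotomy xi a) as [Hxa|Hax].
  - exact (gam_in_earlier _ _ _ (Hg a) xi Hxa).
  - apply closed_at_guess with (del (g xi));
      [apply (gam_guesses _ _ _ (Hg a)) | apply (del_guesses _ _ _ (Hg xi)) | |
       apply (inside_del_idx _ _ _ (Hg xi))].
    destruct Hax as [<-|Hax].
    + apply (gam_lt_del _ _ _ (Hg xi)).
    + apply (earlier_gam_lt_del _ _ _ (Hg xi) a Hax).
Qed.

Lemma club_inter_of_guesses :
  exists beta : T -> U, (forall xi eta, beta xi = beta eta -> xi = eta) /\
    club lt (fun z => forall xi, C (beta xi) z).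
Proof.
  destruct good_stages_exist as [g Hg].
  exists (fun xi => idx (g xi)). split.
  - intros xi eta E. destruct (lt_trichotomy xi eta) as [H|[H|H]]; auto; exfalso.
    + exact (idx_fresh _ _ _ (Hg eta) xi H E).
    + exact (idx_fresh _ _ _ (Hg xi) eta H (eq_sym E)).
  - split.
    + apply closed_inter. intros xi. apply C_club.
    + intros a. exists (gam (g a)). split.
      * intros xi. apply good_stages_gam_inter; auto.
      * left. apply (gam_above _ _ _ (Hg a)).
Qed.

End Construction.
End Omega1.

Theorem mainTheorem10 (T : Type) (lt : T -> T -> Prop) (U : Type) (ltU : U -> U -> Prop) :
  is_omega1 T lt -> is_omega2 T U ltU -> superclub lt ->
  forall C : U -> T -> Prop, (forall a, club lt (C a)) ->
  exists beta : T -> U, (forall xi eta, beta xi = beta eta -> xi = eta) /\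
    club lt (fun z => forall xi, C (beta xi) z).
Proof.
  intros [[wf [trans tri]] [segment unc]] [_ [_ U_big]] [A [A_cofinal A_guess]] C C_club.
  destruct (exists_uncountable_fibres lt wf trans tri segment unc (inside A C) U_big)
    as [a0 Ha0].
  destruct (A_guess (C a0) (proj2 (C_club a0))) as [Y [Y_sub [_ Y_stationary]]].
  eapply club_inter_of_guesses; eauto.
Qed.
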